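(* Let $k\ge 1$ and let $G$ be a maximal $k$-degenerate graph with at least $k+2$ vertices. Then no two vertices of degree exactly $k$ in $G$ are adjacent.
   Context: $G$ is a finite simple undirected graph. For a vertex ordering $\phi:V\to\{1,\dots,|V|\}$ and a vertex $v$, let $d_p(v)$ be the number of neighbours $u$ of $v$ with $\phi(u)<\phi(v)$. $G$ is a maximal $k$-degenerate graph if it has a vertex ordering $\phi$ with $d_p(v)=\min(k,\phi(v)-1)$ for every vertex $v$. *)

From mathcomp Require Import all_boot.
Set Implicit Arguments. Unset Strict Implicit. Unset Printing Implicit Defensive.

Definition simple_graph (T : finType) (e : rel T) : Prop :=
  symmetric e /\ irreflexive e.

Definition deg (T : finType) (e : rel T) (v : T) : nat := #|[set u | e v u]|.

(* Vertex orderings phi : V -> {1,...,|V|} are represented 0-based as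
   bijections phi : T -> 'I_#|T| (position phi v + 1 in the paper). *)
Definition dp (T : finType) (e : rel T) (phi : T -> 'I_#|T|) (v : T) : nat :=
  #|[set u | e v u & phi u < phi v]|.

(* Maximal k-degenerate: some ordering with d_p(v) = min(k, phi(v) - 1)
   (with 0-based phi, phi(v)-1 becomes phi v). *)
Definition maximal_k_degenerate (T : finType) (e : rel T) (k : nat) : Prop :=
  exists phi : T -> 'I_#|T|, bijective phi /\
    forall v : T, dp e phi v = minn k (phi v).

(* The first k+1 vertices of the ordering form a clique, since each of them is
   joined to all its predecessors.  A vertex of degree k among them is therefore
   adjacent to exactly the rest of this clique, and the earlier of two adjacent
   degree-k vertices u, v always lies in it (otherwise it already has k earlier
   neighbours besides v).  Hence both u and v have the clique as neighbourhood,
   and the vertex in position k+2 would have to find its k earlier neighbours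
   among the k-1 clique vertices other than u and v. *)

From mathcomp Require Import all_boot.

Set Implicit Arguments.
Unset Strict Implicit.
Unset Printing Implicit Defensive.

Lemma card_ord_lt n p : p <= n -> #|[set i : 'I_n | i < p]| = p.
Proof.
by move=> le_pn; rewrite -sum1dep_card (big_ord_narrow le_pn) sum1_card card_ord.
Qed.

Section MaximalDegenerate.

Variables (T : finType) (e : rel T) (k : nat) (phi : T -> 'I_#|T|).
Hypotheses (e_sym : symmetric e) (phi_bij : bijective phi).
Hypothesis dpE : forall v, dp e phi v = minn k (phi v).

Definition initial_segment p := [set y | phi y < p].

Lemma card_initial_segment p : p <= #|T| -> #|initial_segment p| = p.
Proof.
move=> le_pT.
have <- : phi @^-1: [set i : 'I_#|T| | i < p] = initial_segment p.
  by apply/setP => y; rewrite !inE.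
by rewrite (on_card_preimset (onW_bij _ phi_bij)) card_ord_lt.
Qed.

Lemma initial_adj_earlier x y : phi x <= k -> phi y < phi x -> e x y.
Proof.
move=> le_xk lt_yx.
have card_earlier : #|[set z | e x z & phi z < phi x]| = #|initial_segment (phi x)|.
  by rewrite -/(dp e phi x) dpE card_initial_segment ?(minn_idPr le_xk) // ltnW.
have sub_earlier : [set z | e x z & phi z < phi x] \subset initial_segment (phi x).
  by apply/subsetP => z; rewrite !inE => /andP[].
move/subset_cardP/(_ sub_earlier)/(_ y): card_earlier.
by rewrite !inE lt_yx andbT => ->.
Qed.

Lemma initial_clique x y : phi x <= k -> phi y <= k -> x != y -> e x y.
Proof.
move=> le_xk le_yk neq_xy; case: (ltngtP (phi x) (phi y)) => [lt_xy|lt_yx|eq_xy].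
- by rewrite e_sym initial_adj_earlier.
- exact: initial_adj_earlier.
- by rewrite (bij_inj phi_bij (val_inj eq_xy)) eqxx in neq_xy.
Qed.

Lemma deg_gt_later_adj x y : k <= phi x -> phi x < phi y -> e x y -> k < deg e x.
Proof.
move=> le_kx lt_xy exy.
have sub : y |: [set z | e x z & phi z < phi x] \subset [set z | e x z].
  by apply/subsetP => z; rewrite !inE => /orP[/eqP -> | /andP[]].
apply: leq_trans (subset_leq_card sub).
have y_not_earlier : phi y < phi x = false by rewrite ltnNge ltnW.
by rewrite cardsU1 -/(dp e phi x) dpE (minn_idPl le_kx) inE y_not_earlier andbF.
Qed.

Lemma initial_deg_neighbourhood x : k < #|T| -> x \in initial_segment k.+1 ->
  deg e x = k -> [set y | e x y] = initial_segment k.+1 :\ x.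
Proof.
move=> lt_kT xC deg_x.
have card_C : #|initial_segment k.+1| = k.+1 by rewrite card_initial_segment.
have sub : initial_segment k.+1 :\ x \subset [set y | e x y].
  apply/subsetP => y; rewrite !inE => /andP[neq_yx le_yk].
  by apply: initial_clique => //; [move: xC; rewrite inE | rewrite eq_sym].
have card_eq : #|initial_segment k.+1 :\ x| = #|[set y | e x y]|.
  move: (cardsD1 x (initial_segment k.+1)).
  by rewrite xC card_C -/(deg e x) deg_x => -[].
by apply/esym/setP; exact: (subset_cardP card_eq sub).
Qed.

Lemma deg_nonadj_ordered u v : k.+1 < #|T| -> phi u < phi v ->
  deg e u = k -> deg e v = k -> ~~ e u v.
Proof.
move=> lt_kT lt_uv deg_u deg_v; apply/negP => euv.
have lt_uk : phi u < k.
  rewrite ltnNge; apply/negP => le_ku.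
  by move: (deg_gt_later_adj le_ku lt_uv euv); rewrite deg_u ltnn.
set C := initial_segment k.+1.
have uC : u \in C by rewrite inE ltnW.
have Nu := initial_deg_neighbourhood (ltnW lt_kT) uC deg_u.
have vCu : v \in C :\ u by rewrite -Nu inE.
have vC : v \in C by move: vCu; rewrite inE => /andP[].
have Nv := initial_deg_neighbourhood (ltnW lt_kT) vC deg_v.
have [g _ phiK] := phi_bij; set w := g (Ordinal lt_kT).
have phi_w : phi w = k.+1 :> nat by rewrite /w phiK.
have w_nonadj x : e w x -> [set y | e x y] = C :\ x -> False.
  by move=> ewx /setP/(_ w); rewrite !inE e_sym ewx phi_w ltnn andbF.
have sub : [set y | e w y & phi y < phi w] \subset C :\ u :\ v.
  apply/subsetP => y; rewrite !inE phi_w => /andP[ewy ->]; rewrite andbT.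
  by apply/andP; split; apply/eqP => eq_y; subst y;
    [exact: (w_nonadj v ewy Nv) | exact: (w_nonadj u ewy Nu)].
have card_Cuv : #|C :\ u :\ v|.+1 = k.
  apply: succn_inj; rewrite -(card_initial_segment (ltnW lt_kT)).
  by rewrite (cardsD1 u C) (cardsD1 v (C :\ u)) uC vCu.
move: (subset_leq_card sub).
by rewrite -/(dp e phi w) dpE phi_w (minn_idPl (leqnSn k)) -{1}card_Cuv ltnn.
Qed.

End MaximalDegenerate.

Theorem mainTheorem12 (T : finType) (e : rel T) (k : nat) :
  simple_graph e -> 1 <= k -> maximal_k_degenerate e k -> k + 2 <= #|T| ->
  forall u v : T, deg e u = k -> deg e v = k -> ~~ e u v.
Proof.
move=> [e_sym e_irr] _ [phi [phi_bij dpE]] le_k2T u v deg_u deg_v.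
have lt_kT : k.+1 < #|T| by rewrite -addn2.
have nonadj := deg_nonadj_ordered e_sym phi_bij dpE lt_kT.
case: (ltngtP (phi u) (phi v)) => [lt_uv | lt_vu | /val_inj/(bij_inj phi_bij) ->].
- exact: nonadj.
- by rewrite e_sym nonadj.
- by rewrite e_irr.
Qed.
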